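(* Let $n_1,n_2,n_3\in\mathbb{N}$, let $\sigma$ be a segment label map on $G=\{1,\dots,n_1\}\times\{1,\dots,n_2\}\times\{1,\dots,n_3\}$, fix any decomposition of $T$ into blocks, and let $\tau'$ be the output of the block-wise method. For each block $B$ let $\mu_B$ denote the labeling of $B$ after Step 2 (i.e. $\lambda_B$ with offsets added, before label reconciliation). Then for each block $B$, any 1-cell $t_1\in B$ and any 2-cell $t_2\in\Gamma(t_1)$: $\mu_B(t_2)\neq\mu_B(s)$ for all $s\in\Gamma(t_1)\setminus\{t_2\}$ if and only if $\tau'(t_2)\neq\tau'(s)$ for all $s\in\Gamma(t_1)\setminus\{t_2\}$.
   Context: Voxel grid and segmentation: $G=\{1,\dots,n_1\}\times\{1,\dots,n_2\}\times\{1,\dots,n_3\}$; voxels $v,w$ are adjacent iff $\sum_i|v_i-w_i|=1$. A segment label map is $\sigma:G\to\mathbb{N}=\{1,2,\dots\}$ such that each level set $\sigma^{-1}(l)$ is connected w.r.t. this adjacency. Topological grid: $T=\{1,\dots,2n_1-1\}\times\{1,\dots,2n_2-1\}\times\{1,\dots,2n_3-1\}$; a cell with exactly $j$ odd coordinates is a $j$-cell. Voxel $r$ corresponds to the 3-cell $2r-1$. Two cells are 6-neighbors if they differ by $1$ in exactly one coordinate. For a $j$-cell $t$, $\Gamma(t)$ is the set of 6-neighbors of $t$ in $T$ that are $(j+1)$-cells. Cells $t_1,t_2$ are connected, $t_1\leftrightarrow t_2$, iff there is $t\in T$ with $t_1,t_2\in\Gamma(t)$. Procedure LABEL: for a voxel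 box $\prod_i\{a_i,\dots,b_i\}\subseteq G$ let $B=\prod_i\{2a_i-1,\dots,2b_i-1\}$ be its cell box (for non-3-cells $t\in B$, $\Gamma(t)\subseteq B$). $\mathrm{LABEL}(\sigma,B)$ produces $\lambda:B\to\mathbb{N}_0$: (1) $\lambda(2r-1)=\sigma(r)$ for 3-cells. (2) For $j=2,1,0$ in this order: for each $j$-cell $t\in B$ let $\theta(t)$ be the set of positive integers occurring exactly once in $(\lambda(s))_{s\in\Gamma(t)}$; $t$ is active iff $\theta(t)\ne\emptyset$, inactive $j$-cells get label $0$; the active $j$-cells of $B$ are partitioned into maximal sets of cells with equal $\theta$ that are connected by $\leftrightarrow$-paths inside the set; these classes are numbered $1,\dots,m_j(B)$ arbitrarily and each active $j$-cell gets its class number. Block-wise method: for each axis $i$ choose odd integers $1=a^i_0<\dots<a^i_{m_i}=2n_i-1$; blocks are the boxes $\prod_i\{a^i_{k_i-1},\dots,a^i_{k_i}\}$. Step 1: $\lambda_B=\mathrm{LABEL}(\sigma,B)$ for each block. Step 2: with blocks ordered $B_1,\dots,B_K$, add offset $\sum_{k'<k}m_j(B_{k'})$ to each positive $j$-cell label of $\lambda_{B_k}$ ($j\in\{0,1,2\}$). Step 3: for $j\in\{1,2\}$, via union–find, unite the labels received in different blocks by any active $j$-cell lying in several blocks, and replace every positive $j$-cell label by its set representative. Step 4: for each 0-cell $t_0$ and each pair of distinct 1-cell labels occurring exactly once among the current labels of $\Gamma(t_0)$, merge the two labels if the corresponding 1-cells bound the same set of current 2-cell labels; if any merge took place at $t_0$,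 recompute the activity of $t_0$ and set its label to $0$ if inactive. The result is $\tau':T\to\mathbb{N}_0$. *)

From mathcomp Require Import all_boot.
Set Implicit Arguments.
Unset Strict Implicit.
Unset Printing Implicit Defensive.

Definition cell := (nat * nat * nat)%type.
Definition cx (t : cell) : nat := t.1.1.
Definition cy (t : cell) : nat := t.1.2.
Definition cz (t : cell) : nat := t.2.

(** number of odd coordinates: t is a (dim t)-cell *)
Definition dim (t : cell) : nat := odd (cx t) + odd (cy t) + odd (cz t).

Definition inG (n r : cell) : bool :=
  [&& 0 < cx r <= cx n, 0 < cy r <= cy n & 0 < cz r <= cz n].
Definition inT (n t : cell) : bool :=
  [&& 0 < cx t <= 2 * cx n - 1, 0 < cy t <= 2 * cy n - 1
    & 0 < cz t <= 2 * cz n - 1].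

Definition absd (a b : nat) : nat := (a - b) + (b - a).
Definition adjacent (r w : cell) : bool :=
  absd (cx r) (cx w) + absd (cy r) (cy w) + absd (cz r) (cz w) == 1.

Definition is_segment_map (n : cell) (sigma : cell -> nat) : Prop :=
  (forall r, inG n r -> 0 < sigma r) /\
  (forall r w, inG n r -> inG n w -> sigma r = sigma w ->
     exists p : seq cell,
       [/\ path adjacent r p, last r p = w
         & all (fun v => inG n v && (sigma v == sigma r)) p]).

(** the voxel r corresponding to the 3-cell t = 2r - 1 *)
Definition voxel_of (t : cell) : cell :=
  ((cx t).+1./2, (cy t).+1./2, (cz t).+1./2).

Definition neighbors6 (t : cell) : seq cell :=
  [:: ((cx t).+1, cy t, cz t) ; ((cx t).-1, cy t, cz t);
      (cx t, (cy t).+1, cz t) ; (cx t, (cy t).-1, cz t);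
      (cx t, cy t, (cz t).+1) ; (cx t, cy t, (cz t).-1)].

Definition Gamma (n t : cell) : seq cell :=
  [seq s <- neighbors6 t | inT n s && (dim s == (dim t).+1)].

Definition conn (n : cell) (t1 t2 : cell) : Prop :=
  exists t, [/\ inT n t, t1 \in Gamma n t & t2 \in Gamma n t].

Definition theta (lab : cell -> nat) (S : seq cell) (x : nat) : bool :=
  (0 < x) && (count_mem x (map lab S) == 1).
Definition active (lab : cell -> nat) (S : seq cell) : Prop :=
  exists x, theta lab S x.

(** a path x = c0, c1, ..., ck (p = [:: c1; ...; ck]) with consecutive
    cells related by R and every ci (i >= 1) satisfying P *)
Fixpoint chain (R : cell -> cell -> Prop) (P : cell -> Prop)
    (x : cell) (p : seq cell) : Prop :=
  match p with
  | [::] => True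
  | y :: p' => [/\ R x y, P y & chain R P y p']
  end.

Definition block := (cell * cell)%type.
Definition inB (b : block) (t : cell) : bool :=
  [&& cx b.1 <= cx t <= cx b.2, cy b.1 <= cy t <= cy b.2
    & cz b.1 <= cz t <= cz b.2].

Definition same_class (n : cell) (b : block) (lab : cell -> nat) (j : nat)
    (t t' : cell) : Prop :=
  let P := fun c => [/\ inB b c, dim c = j, active lab (Gamma n c)
                      & forall x, theta lab (Gamma n c) x =
                                  theta lab (Gamma n t) x] in
  P t' /\ exists p, chain (conn n) P t p /\ last t p = t'.

(** lab (with class counts m j = m_j(B)) is a possible output of
    LABEL(sigma, B) (class numbering is arbitrary). *)
Definition is_LABEL (n : cell) (sigma : cell -> nat) (b : block)
    (lab : cell -> nat) (m : nat -> nat) : Prop :=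
  (forall t, inB b t -> dim t = 3 -> lab t = sigma (voxel_of t)) /\
  (forall j, j < 3 ->
    (forall t, inB b t -> dim t = j -> ~ active lab (Gamma n t) -> lab t = 0) /\
    (forall t, inB b t -> dim t = j -> active lab (Gamma n t) ->
        0 < lab t <= m j) /\
    (forall k, 0 < k <= m j ->
        exists t, [/\ inB b t, dim t = j, active lab (Gamma n t) & lab t = k]) /\
    (forall t t', inB b t -> inB b t' -> dim t = j -> dim t' = j ->
        active lab (Gamma n t) -> active lab (Gamma n t') ->
        (lab t = lab t' <-> same_class n b lab j t t'))).

Definition valid_axis (ni : nat) (a : seq nat) : bool :=
  [&& head 0 a == 1, last 0 a == 2 * ni - 1, sorted ltn a & all odd a].
Definition intervals (a : seq nat) : seq (nat * nat) := zip a (behead a).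
Definition blocks (A1 A2 A3 : seq nat) : seq block :=
  flatten [seq [seq ((p1.1, p2.1, p3.1), (p1.2, p2.2, p3.2))
                 | p2 <- intervals A2, p3 <- intervals A3]
          | p1 <- intervals A1].

Definition offset (ordB : seq block) (m : block -> nat -> nat) (j : nat)
    (b : block) : nat :=
  \sum_(b' <- take (index b ordB) ordB) m b' j.
Definition mu_of (lam : block -> cell -> nat) (m : block -> nat -> nat)
    (ordB : seq block) (b : block) (t : cell) : nat :=
  if (dim t < 3) && (0 < lam b t) then lam b t + offset ordB m (dim t) b
  else lam b t.

Inductive eqv (R : nat -> nat -> Prop) : nat -> nat -> Prop :=
| eqv_base x y : R x y -> eqv R x y
| eqv_refl x : eqv R x x
| eqv_sym x y : eqv R x y -> eqv R y x
| eqv_trans x y z : eqv R x y -> eqv R y z -> eqv R x z.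
Definition is_rep (R : nat -> nat -> Prop) (rep : nat -> nat) : Prop :=
  (forall x, eqv R x (rep x)) /\ (forall x y, eqv R x y -> rep x = rep y).

(** Step 3: labels received by an active j-cell lying in several blocks *)
Definition unite (A1 A2 A3 : seq nat) (mu : block -> cell -> nat) (j : nat)
    (x y : nat) : Prop :=
  exists b b' t, [/\ b \in blocks A1 A2 A3, b' \in blocks A1 A2 A3,
    inB b t, inB b' t & [/\ dim t = j, 0 < mu b t, 0 < mu b' t,
                           x = mu b t & y = mu b' t]].

(** labels after Step 3 (3-cells carry sigma; 0-cells keep a label received
    from one of their blocks) *)
Definition step3_labels (n : cell) (sigma : cell -> nat) (A1 A2 A3 : seq nat)
    (mu : block -> cell -> nat) (rep1 rep2 : nat -> nat) (tau3 : cell -> nat)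
    : Prop :=
  (forall t, inT n t -> dim t = 3 -> tau3 t = sigma (voxel_of t)) /\
  (forall b t, b \in blocks A1 A2 A3 -> inB b t -> dim t = 2 ->
     tau3 t = if 0 < mu b t then rep2 (mu b t) else 0) /\
  (forall b t, b \in blocks A1 A2 A3 -> inB b t -> dim t = 1 ->
     tau3 t = if 0 < mu b t then rep1 (mu b t) else 0) /\
  (forall t, inT n t -> dim t = 0 ->
     exists b, [/\ b \in blocks A1 A2 A3, inB b t & tau3 t = mu b t]).

Definition mergeable (n : cell) (S : cell -> nat) (t0 : cell) (x y : nat)
    : Prop :=
  exists c c', [/\ c \in Gamma n t0, c' \in Gamma n t0, S c = x, S c' = y &
    [/\ x <> y, theta S (Gamma n t0) x, theta S (Gamma n t0) y &
        forall z, (z \in map S (Gamma n c)) = (z \in map S (Gamma n c'))]].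

Definition step4_step (n : cell) (S : cell -> nat) (t0 : cell)
    (S' : cell -> nat) : Prop :=
  exists rep, is_rep (mergeable n S t0) rep /\
  let S1 := fun c => if (dim c == 1) && (0 < S c) then rep (S c) else S c in
  (forall c, c <> t0 -> S' c = S1 c) /\
  (((exists x y, mergeable n S t0 x y) /\ ~ active S1 (Gamma n t0)) ->
     S' t0 = 0) /\
  (~ ((exists x y, mergeable n S t0 x y) /\ ~ active S1 (Gamma n t0)) ->
     S' t0 = S t0).

Fixpoint step4 (n : cell) (S : cell -> nat) (ord : seq cell)
    (Sfin : cell -> nat) : Prop :=
  match ord with
  | [::] => forall c, Sfin c = S c
  | t0 :: rest => exists S', step4_step n S t0 S' /\ step4 n S' rest Sfin
  end.

(** tau is a possible output tau' of the block-wise method, using the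
    Step-1 labelings lam (with class counts m) and the block order ordB. *)
Definition blockwise_output (n : cell) (sigma : cell -> nat)
    (A1 A2 A3 : seq nat) (lam : block -> cell -> nat)
    (m : block -> nat -> nat) (ordB : seq block) (tau : cell -> nat) : Prop :=
  (forall b, b \in blocks A1 A2 A3 -> is_LABEL n sigma b (lam b) (m b)) /\
  perm_eq ordB (blocks A1 A2 A3) /\
  let mu := mu_of lam m ordB in
  exists rep1 rep2 tau3 ord0,
    [/\ is_rep (unite A1 A2 A3 mu 1) rep1, is_rep (unite A1 A2 A3 mu 2) rep2,
        step3_labels n sigma A1 A2 A3 mu rep1 rep2 tau3,
        uniq ord0 /\ (forall t, (t \in ord0) = inT n t && (dim t == 0))
      & step4 n tau3 ord0 tau].

From mathcomp Require Import all_boot zify.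
From Stdlib Require Import Classical.

(* Any two 2-cells of Gamma(t1) are
   <->-connected through t1, so LABEL gives them the same label in B iff
   they have the same theta; and the theta of a 2-cell only depends on sigma
   at its two voxels, not on the block.  The offsets of Step 2 make labels of
   different blocks disjoint, and every union of Step 3 identifies two labels
   of one and the same cell, so all labels in a union-find class are carried
   by 2-cells with the same theta.  Hence Step 3 never merges two distinct
   labels around t1, and Step 4 does not touch 2-cells at all. *)

Lemma mem_zip (T : eqType) (s t : seq T) x y :
  (x, y) \in zip s t -> x \in s /\ y \in t.
Proof.
elim: s t => [|a s IH] [|c t] //=.
rewrite in_cons => /orP [/eqP [-> ->]|/IH [xs yt]]; first by split; apply: mem_head.
by rewrite !in_cons xs yt !orbT.
Qed.

Lemma intervals_odd {a p} : all odd a -> p \in intervals a -> odd p.1 /\ odd p.2.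
Proof.
case: p => x y /allP odd_a /mem_zip [xa ya].
by split; apply: odd_a => //; apply: mem_behead.
Qed.

Definition odd_bounds (b : block) : Prop :=
  [/\ odd (cx b.1), odd (cy b.1), odd (cz b.1) &
     [/\ odd (cx b.2), odd (cy b.2) & odd (cz b.2)]].

Lemma blocks_odd A1 A2 A3 b : all odd A1 -> all odd A2 -> all odd A3 ->
  b \in blocks A1 A2 A3 -> odd_bounds b.
Proof.
move=> o1 o2 o3 /flattenP [s /mapP [p1 p1A ->]].
move=> /allpairsP [[p2 p3] [/= p2A p3A ->]].
have [] := intervals_odd o1 p1A; have [] := intervals_odd o2 p2A.
by have [] := intervals_odd o3 p3A.
Qed.

Lemma neighbors6P x y z s : s \in neighbors6 (x, y, z) ->
  s = (x.+1, y, z) \/ s = (x.-1, y, z) \/ s = (x, y.+1, z) \/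
  s = (x, y.-1, z) \/ s = (x, y, z.+1) \/ s = (x, y, z.-1).
Proof.
rewrite /neighbors6 /cx /cy /cz /= !inE.
by do ! (case/orP => [/eqP ->|]; [by auto 10|]); move/eqP ->; auto 10.
Qed.

Lemma mem_Gamma {n t s} : s \in Gamma n t ->
  [/\ inT n s, dim s = (dim t).+1 & s \in neighbors6 t].
Proof. by rewrite mem_filter => /andP [/andP [? /eqP ?] ?]. Qed.

(* The moved coordinate becomes odd, and the bounds of a block are odd, so a
   coface of a cell of the block cannot leave it. *)
Lemma Gamma_inB {b n t s} : odd_bounds b -> inB b t -> s \in Gamma n t -> inB b s.
Proof.
have mod2 a : odd a -> a %% 2 = 1 by rewrite modn2 => ->.
case: b => [[[l1 l2] l3] [[h1 h2] h3]].
case=> /mod2 o1 /mod2 o2 /mod2 o3 [/mod2 o4 /mod2 o5 /mod2 o6].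
case: t => [[x y] z] tb /mem_Gamma [_ dim_s /neighbors6P s_nb].
move: tb dim_s o1 o2 o3 o4 o5 o6; rewrite /inB /dim /cx /cy /cz /=.
by case: s_nb => [|[|[|[|[|]]]]] ->; rewrite /= -!modn2; lia.
Qed.

Lemma Gamma_inT {n t c d} : c \in Gamma n t -> d \in Gamma n t -> c <> d ->
  inT n t.
Proof.
case: t => [[x y] z] /mem_Gamma [cT _ /neighbors6P c_nb]
                     /mem_Gamma [dT _ /neighbors6P d_nb] c_neq_d.
move: c_neq_d cT dT; rewrite /inT /cx /cy /cz /=.
by case: c_nb => [|[|[|[|[|]]]]] ->; case: d_nb => [|[|[|[|[|]]]]] -> /= c_neq_d;
  try (by case: c_neq_d); lia.
Qed.

Lemma offset_index_lt {ordB : seq block} m j {b b'} : b \in ordB ->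
  index b ordB < index b' ordB ->
  offset ordB m j b + m b j <= offset ordB m j b'.
Proof.
move=> b_ord lt_bb'; rewrite /offset.
have -> : index b' ordB =
          (index b ordB).+1 + (index b' ordB - (index b ordB).+1) by lia.
rewrite takeD (take_nth b) ?index_mem // nth_index // -cats1 !big_cat big_seq1.
exact: leq_addr.
Qed.

Lemma offset_inj {ordB : seq block} {m : block -> nat -> nat} {j b b' x x'} :
  b \in ordB -> b' \in ordB -> 0 < x <= m b j -> 0 < x' <= m b' j ->
  x + offset ordB m j b = x' + offset ordB m j b' -> b = b'.
Proof.
move=> b_ord b'_ord x_range x'_range eq_shift.
case: (ltngtP (index b ordB) (index b' ordB)) => [lt_i|lt_i|eq_i].
- by have := offset_index_lt m j b_ord lt_i; lia.
- by have := offset_index_lt m j b'_ord lt_i; lia.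
- by rewrite -(nth_index b b_ord) eq_i nth_index.
Qed.

Lemma step4_dim2 {n ord S Sfin} : {in ord, forall t, dim t = 0} ->
  step4 n S ord Sfin -> forall c, dim c = 2 -> Sfin c = S c.
Proof.
elim: ord S => [|t0 ord IH] S ord_dim0 /=; first by move=> S_eq c _.
move=> [S' [[rep [_ [S'E _]]] S'_Sfin]] c dim_c.
rewrite (IH S' _ S'_Sfin c dim_c) => [|t t_ord]; last first.
  by apply: ord_dim0; rewrite in_cons t_ord orbT.
rewrite S'E ?dim_c // => c_t0.
by move: (ord_dim0 t0 (mem_head _ _)); rewrite -c_t0 dim_c.
Qed.

Lemma eqv_gt0 (R : nat -> nat -> Prop) x y :
  (forall a c, R a c -> 0 < a /\ 0 < c) -> eqv R x y -> (0 < x) = (0 < y).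
Proof.
move=> R_gt0; elim=> [a c /R_gt0 [-> ->] | a | a c _ -> | a c d _ -> _ ->] //.
Qed.

Definition reconciled (rep : nat -> nat) (x : nat) : nat :=
  if 0 < x then rep x else 0.

Lemma reconciled_eqv {R rep x y} :
  (forall a c, R a c -> 0 < a /\ 0 < c) -> is_rep R rep ->
  reconciled rep x = reconciled rep y -> eqv R x y.
Proof.
move=> R_gt0 [x_rep _]; rewrite /reconciled.
have rep_gt0 z : (0 < z) = (0 < rep z) by apply: eqv_gt0 (x_rep z).
case: (posnP x) => [-> | x_gt0]; case: (posnP y) => [-> | y_gt0] //=.
- by move=> _; apply: eqv_refl.
- by move=> rep_y0; move: y_gt0; rewrite rep_gt0 -rep_y0.
- by move=> rep_x0; move: x_gt0; rewrite rep_gt0 rep_x0.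
by move=> rep_xy; apply: eqv_trans (x_rep x) _; rewrite rep_xy; apply: eqv_sym.
Qed.

Lemma eqv_carried {A B C : Type} {R : nat -> nat -> Prop}
    {carries : nat -> A -> Prop} {f : A -> B -> C} {x y} :
  (forall z u v, carries z u -> carries z v -> f u =1 f v) ->
  (forall a c, R a c -> exists u v, [/\ carries a u, carries c v & f u =1 f v]) ->
  eqv R x y ->
  x = y \/ exists u v, [/\ carries x u, carries y v & f u =1 f v].
Proof.
move=> carries_f R_f; elim=> [a c /R_f | a | a c _ | a c d _ IHac _].
- by right.
- by left.
- case=> [-> | [u [v [au cv fuv]]]]; first by left.
  by right; exists v, u; split=> // z; rewrite fuv.
case: IHac => [-> // | [u [v [au cv fuv]]]].
case=> [<- | [v' [w [cv' dw fv'w]]]]; first by right; exists u, v.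
right; exists u, w; split=> // z.
by rewrite fuv (carries_f _ _ _ cv cv') fv'w.
Qed.

Section BlockLabels.

Context {n : cell} {sigma : cell -> nat} {A1 A2 A3 : seq nat}.
Context {lam : block -> cell -> nat} {m : block -> nat -> nat}.
Context {ordB : seq block}.

Hypothesis odd_A1 : all odd A1.
Hypothesis odd_A2 : all odd A2.
Hypothesis odd_A3 : all odd A3.
Hypothesis blocks_ordB : {subset blocks A1 A2 A3 <= ordB}.
Hypothesis lam_LABEL :
  forall b, b \in blocks A1 A2 A3 -> is_LABEL n sigma b (lam b) (m b).

Local Notation mu := (mu_of lam m ordB).
Let theta3 (t : cell) := theta (fun s => sigma (voxel_of s)) (Gamma n t).

Let odd_blocks {b} : b \in blocks A1 A2 A3 -> odd_bounds b.
Proof. exact: blocks_odd. Qed.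

Lemma lam_active {b t} : b \in blocks A1 A2 A3 -> inB b t -> dim t = 2 ->
  0 < lam b t -> active (lam b) (Gamma n t) /\ lam b t <= m b 2.
Proof.
move=> /lam_LABEL [_ /(_ 2 isT) [inactive0 [active_range _]]] tb dim_t lam_gt0.
have act : active (lam b) (Gamma n t).
  by apply: NNPP => not_act; move: lam_gt0; rewrite inactive0.
by have /andP [_ ->] := active_range t tb dim_t act.
Qed.

Lemma theta_lam {b t} : b \in blocks A1 A2 A3 -> inB b t -> dim t = 2 ->
  theta (lam b) (Gamma n t) =1 theta3 t.
Proof.
move=> bB tb dim_t x; rewrite /theta3 /theta.
suff -> : map (lam b) (Gamma n t) = map (fun s => sigma (voxel_of s)) (Gamma n t).
  by [].
apply/eq_in_map => s s_G; have [lam3 _] := lam_LABEL _ bB.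
apply: lam3; first exact: Gamma_inB (odd_blocks bB) tb s_G.
by have [_ -> _] := mem_Gamma s_G; rewrite dim_t.
Qed.

Lemma mu_dim2 b t : dim t = 2 ->
  mu b t = if 0 < lam b t then lam b t + offset ordB m 2 b else lam b t.
Proof. by move=> dim_t; rewrite /mu_of dim_t. Qed.

Lemma mu_gt0 b t : dim t = 2 -> (0 < mu b t) = (0 < lam b t).
Proof.
move=> dim_t; rewrite mu_dim2 //.
by case: (posnP (lam b t)) => [-> | lam_gt0] //; lia.
Qed.

Definition carries2 (x : nat) (t : cell) : Prop :=
  exists b, [/\ b \in blocks A1 A2 A3, inB b t, dim t = 2, 0 < lam b t
              & mu b t = x].

Lemma carries2_gt0 {x t} : carries2 x t -> 0 < x.
Proof. by move=> [b [_ _ dim_t lam_gt0 <-]]; rewrite mu_gt0. Qed.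

Lemma carries2_theta {x t t'} : carries2 x t -> carries2 x t' ->
  theta3 t =1 theta3 t'.
Proof.
move=> [b [bB tb dim_t lam_gt0 <-]] [b' [b'B t'b dim_t' lam'_gt0 eq_mu]].
have [act le_m] := lam_active bB tb dim_t lam_gt0.
have [act' le_m'] := lam_active b'B t'b dim_t' lam'_gt0.
move: eq_mu; rewrite !mu_dim2 // lam_gt0 lam'_gt0 => eq_mu.
have eq_b : b' = b.
  apply: (offset_inj (blocks_ordB _ b'B) (blocks_ordB _ bB) _ _ eq_mu).
    by rewrite lam'_gt0 le_m'.
  by rewrite lam_gt0 le_m.
subst b'; have eq_lam := addIn eq_mu.
have [_ /(_ 2 isT) [_ [_ [_ class_iff]]]] := lam_LABEL _ bB.
have [[_ _ _ theta_eq] _] := (class_iff _ _ t'b tb dim_t' dim_t act' act).1 eq_lam.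
by move=> y; rewrite -(theta_lam bB tb) // -(theta_lam bB t'b) // theta_eq.
Qed.

Lemma unite2_carried x y : unite A1 A2 A3 mu 2 x y ->
  exists t t', [/\ carries2 x t, carries2 y t' & theta3 t =1 theta3 t'].
Proof.
move=> [b [b' [t [bB b'B tb tb' [dim_t mu_pos mu_pos' -> ->]]]]].
by exists t, t; split=> //; [exists b | exists b'];
  split=> //; rewrite -mu_gt0.
Qed.

(* Both 2-cells are cofaces of t, hence <->-connected by a one-step path. *)
Lemma lam_Gamma_theta {b t c d} : b \in blocks A1 A2 A3 ->
  c \in Gamma n t -> d \in Gamma n t -> inB b c -> inB b d ->
  dim c = 2 -> dim d = 2 -> 0 < lam b c -> 0 < lam b d ->
  theta3 c =1 theta3 d -> lam b c = lam b d.
Proof.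
move=> bB c_G d_G cb db dim_c dim_d lam_c lam_d theta_cd.
have [c_act _] := lam_active bB cb dim_c lam_c.
have [d_act _] := lam_active bB db dim_d lam_d.
have [_ /(_ 2 isT) [_ [_ [_ class_iff]]]] := lam_LABEL _ bB.
have theta_dc y : theta (lam b) (Gamma n d) y = theta (lam b) (Gamma n c) y.
  by rewrite (theta_lam bB db) // (theta_lam bB cb) // theta_cd.
have [<- // | c_neq_d] := eqVneq c d.
apply/(class_iff _ _ cb db dim_c dim_d c_act d_act); split=> //.
exists [:: d]; split=> //=; split=> //.
by exists t; split=> //; apply: Gamma_inT c_G d_G (elimN eqP c_neq_d).
Qed.

Lemma reconciled_Gamma_inj {rep2 b t1 c d} :
  is_rep (unite A1 A2 A3 mu 2) rep2 -> b \in blocks A1 A2 A3 -> inB b t1 ->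
  dim t1 = 1 -> c \in Gamma n t1 -> d \in Gamma n t1 ->
  reconciled rep2 (mu b c) = reconciled rep2 (mu b d) -> mu b c = mu b d.
Proof.
move=> rep2P bB t1b dim_t1 c_G d_G eq_rec.
have dim2 s : s \in Gamma n t1 -> dim s = 2.
  by move=> /mem_Gamma [_ -> _]; rewrite dim_t1.
have cb := Gamma_inB (odd_blocks bB) t1b c_G.
have db := Gamma_inB (odd_blocks bB) t1b d_G.
have unite_gt0 x y : unite A1 A2 A3 mu 2 x y -> 0 < x /\ 0 < y.
  by move=> [? [? [? [_ _ _ _ [_ ? ? -> ->]]]]].
have [// | [u [v [cu dv theta_uv]]]] :=
  eqv_carried (@carries2_theta) unite2_carried
              (reconciled_eqv unite_gt0 rep2P eq_rec).
have lam_c : 0 < lam b c by rewrite -mu_gt0 ?dim2 //; exact: carries2_gt0 cu.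
have lam_d : 0 < lam b d by rewrite -mu_gt0 ?dim2 //; exact: carries2_gt0 dv.
have cc : carries2 (mu b c) c by exists b; split=> //; apply: dim2.
have dd : carries2 (mu b d) d by exists b; split=> //; apply: dim2.
have eq_lam : lam b c = lam b d.
  apply: (lam_Gamma_theta bB c_G d_G cb db) => //; rewrite ?dim2 // => z.
  by rewrite (carries2_theta cc cu) theta_uv (carries2_theta dv dd).
by rewrite !mu_dim2 ?dim2 // eq_lam.
Qed.

End BlockLabels.

Theorem proposition3 (n1 n2 n3 : nat) (sigma : cell -> nat)
    (A1 A2 A3 : seq nat) (lam : block -> cell -> nat)
    (m : block -> nat -> nat) (ordB : seq block) (tau : cell -> nat) :
  0 < n1 -> 0 < n2 -> 0 < n3 ->
  is_segment_map (n1, n2, n3) sigma ->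
  valid_axis n1 A1 -> valid_axis n2 A2 -> valid_axis n3 A3 ->
  blockwise_output (n1, n2, n3) sigma A1 A2 A3 lam m ordB tau ->
  forall (b : block) (t1 t2 : cell),
    b \in blocks A1 A2 A3 -> inB b t1 -> dim t1 = 1 ->
    t2 \in Gamma (n1, n2, n3) t1 ->
    ((forall s, s \in Gamma (n1, n2, n3) t1 -> s <> t2 ->
        mu_of lam m ordB b t2 <> mu_of lam m ordB b s) <->
     (forall s, s \in Gamma (n1, n2, n3) t1 -> s <> t2 -> tau t2 <> tau s)).
Proof.
move=> _ _ _ _ /and4P [_ _ _ odd1] /and4P [_ _ _ odd2] /and4P [_ _ _ odd3].
move=> [lamP [permB [_ [rep2 [tau3 [ord0 [_ rep2P [_ [tau3_2 _]] [_ ord0E] step4P]]]]]]].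
move=> b t1 t2 bB t1b dim_t1 t2_G.
have blocks_ordB : {subset blocks A1 A2 A3 <= ordB}.
  by move=> b'; rewrite (perm_mem permB).
have ord0_dim0 : {in ord0, forall t, dim t = 0}.
  by move=> t; rewrite ord0E => /andP [_ /eqP].
have tauE s : s \in Gamma (n1, n2, n3) t1 ->
    tau s = reconciled rep2 (mu_of lam m ordB b s).
  move=> s_G; have [_ dim_s _] := mem_Gamma s_G; rewrite dim_t1 in dim_s.
  rewrite (step4_dim2 ord0_dim0 step4P) //.
  by apply: tau3_2 => //; apply: Gamma_inB s_G; [apply: blocks_odd bB | ].
have tau_mu s : s \in Gamma (n1, n2, n3) t1 ->
    (tau t2 = tau s) <-> (mu_of lam m ordB b t2 = mu_of lam m ordB b s).
  move=> s_G; rewrite (tauE t2 t2_G) (tauE s s_G); split=> [|-> //].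
  exact: (reconciled_Gamma_inj odd1 odd2 odd3 blocks_ordB lamP rep2P
            bB t1b dim_t1 t2_G s_G).
by split=> neq s s_G s_t2 eq_s; apply: (neq s s_G s_t2); apply/(tau_mu s s_G).
Qed.
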